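(* Let $A$ be a ring, $\delta=(\delta_1,\ldots,\delta_n)$ an $n$-tuple of pairwise commuting derivations of $A$, $d_i\in\mathbb{N}\cup\{\infty\}$, $I=\{\alpha\in\mathbb{N}^n\mid\alpha_i\le d_i\ \forall i\}$, and suppose there are elements $y^{[\alpha]}\in N_\alpha$ ($\alpha\in I$) with $\delta^\alpha(y^{[\alpha]})=1$. Then: (1) there exists a unique $\delta$-descent $\{x^{[\alpha]}\mid\alpha\in I\}$ such that for each $0\neq\alpha\in I$, $x^{[\alpha]}=y^{[\alpha]}+\sum_{0\le\beta<\alpha}c_{\alpha\beta}y^{[\beta]}$ for some $c_{\alpha\beta}\in A^\delta$ with $c_{\alpha,0}=0$; (2) there exists a unique $\delta$-descent $\{z^{[\alpha]}\mid\alpha\in I\}$ such that for each $0\neq\alpha\in I$, $z^{[\alpha]}=y^{[\alpha]}+\sum_{0\le\beta<\alpha}y^{[\beta]}b_{\alpha\beta}$ for some $b_{\alpha\beta}\in A^\delta$ with $b_{\alpha,0}=0$.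
   Context: $A^\delta=\bigcap_i\ker\delta_i$; $N_\alpha=\bigcap_{i=1}^n\ker\delta_i^{\alpha_i+1}$; $\beta\le\alpha$ means $\beta_i\le\alpha_i$ for all $i$, and $\beta<\alpha$ means $\beta\le\alpha$, $\beta\neq\alpha$; $\delta^\alpha=\delta_1^{\alpha_1}\cdots\delta_n^{\alpha_n}$. A family $\{x^{[\alpha]}\mid\alpha\in I\}$ is a $\delta$-descent if $x^{[0]}=1$ and $\delta^\alpha(x^{[\beta]})=x^{[\beta-\alpha]}$ for all $\alpha\in\mathbb{N}^n$, $\beta\in I$, with $x^{[\gamma]}:=0$ for $\gamma\notin\mathbb{N}^n$. *)

From HB Require Import structures.
From mathcomp Require Import all_boot all_order all_algebra.
Set Implicit Arguments. Unset Strict Implicit. Unset Printing Implicit Defensive.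
Import GRing.Theory.
Local Open Scope ring_scope.

Definition mi (n : nat) := {ffun 'I_n -> nat}.

Definition mle n (b a : mi n) : bool := [forall i, (b i <= a i)%N].
Definition mlt n (b a : mi n) : bool := mle b a && (b != a).
(* componentwise difference (only used when b <= a) *)
Definition msub n (a b : mi n) : mi n := [ffun i => (a i - b i)%N].
Definition mzero n : mi n := [ffun _ => 0%N].

(* Index set I = {alpha | alpha_i <= d_i}, d_i in N u {oo} (None = oo) *)
Definition inI n (dd : 'I_n -> option nat) (a : mi n) : bool :=
  [forall i, if dd i is Some k then (a i <= k)%N else true].

Definition is_derivation (A : pzRingType) (D : A -> A) : Prop :=
  (forall x y, D (x + y) = D x + D y) /\
  (forall x y, D (x * y) = D x * y + x * D y).

(* delta^alpha = delta_1^{alpha_1} ... delta_n^{alpha_n} *)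
Definition dpow (A : Type) n (d : 'I_n -> A -> A) (a : mi n) : A -> A :=
  foldr (fun i f => fun x => iter (a i) (d i) (f x)) id (enum 'I_n).

Definition dconst (A : pzRingType) n (d : 'I_n -> A -> A) (c : A) : Prop :=
  forall i, d i c = 0.

Definition inN (A : pzRingType) n (d : 'I_n -> A -> A) (a : mi n) (x : A) : Prop :=
  forall i, iter (a i).+1 (d i) x = 0.

Definition is_descent (A : pzRingType) n (d : 'I_n -> A -> A)
    (dd : 'I_n -> option nat) (x : mi n -> A) : Prop :=
  x (mzero n) = 1 /\
  forall (a b : mi n), inI dd b ->
    dpow d a (x b) = if mle a b then x (msub b a) else 0.

Definition mbound n (a : mi n) : nat := \max_(i < n) a i.
Definition mof n (a : mi n) (b : {ffun 'I_n -> 'I_(mbound a).+1}) : mi n :=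
  [ffun i => nat_of_ord (b i)].
Definition sum_below (A : pzRingType) n (a : mi n) (F : mi n -> A) : A :=
  \sum_(b : {ffun 'I_n -> 'I_(mbound a).+1} | mlt (mof b) a) F (mof b).

Definition left_form (A : pzRingType) n (d : 'I_n -> A -> A)
    (dd : 'I_n -> option nat) (y x : mi n -> A) : Prop :=
  forall a : mi n, inI dd a -> a != mzero n ->
    exists c : mi n -> A,
      (forall b, mlt b a -> dconst d (c b)) /\ c (mzero n) = 0 /\
      x a = y a + sum_below a (fun b => c b * y b).

Definition right_form (A : pzRingType) n (d : 'I_n -> A -> A)
    (dd : 'I_n -> option nat) (y z : mi n -> A) : Prop :=
  forall a : mi n, inI dd a -> a != mzero n ->
    exists c : mi n -> A,
      (forall b, mlt b a -> dconst d (c b)) /\ c (mzero n) = 0 /\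
      z a = y a + sum_below a (fun b => y b * c b).

From HB Require Import structures.
From mathcomp Require Import all_boot all_order all_algebra.
From mathcomp Require Import zify.
Set Implicit Arguments. Unset Strict Implicit. Unset Printing Implicit Defensive.
Import GRing.Theory.
Local Open Scope ring_scope.

(* Existence goes by induction on the total degree |a|. Given a descent x on
   degrees <= N and |a| = N + 1, put x^[a] := y^[a] - sum_(0 <> b < a) e_b x^[b],
   where the coefficients are determined from the top down by
   e_g = delta^g y^[a] - x^[a-g] - sum_(g < b < a) e_b x^[b-g]; applying delta_i to
   this recursion shows, again from the top down, that every e_g is a constant,
   and the recursion is exactly what makes delta^g x^[a] = x^[a-g].
   For uniqueness, the difference of two solutions of degree a is
   sum_(b < a) c_b y^[b] with constant c_b and is killed by every delta^g, g <> 0;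
   applying delta^b for b maximal with c_b <> 0 leaves c_b, because
   delta^b y^[b] = 1 and delta^b y^[b'] = 0 unless b <= b'.
   Statement (2) is statement (1) in the opposite ring, where the delta_i are
   still derivations. *)

Section MultiIndices.
Variable n : nat.
Implicit Types a b g : mi n.

Definition mdeg a : nat := (\sum_i a i)%N.
Definition munit (i : 'I_n) : mi n := [ffun j => nat_of_bool (j == i)].
Definition madd a b : mi n := [ffun i => (a i + b i)%N].

Lemma mleP a b : reflect (forall i, a i <= b i)%N (mle a b).
Proof. exact: forallP. Qed.

Lemma mlexx a : mle a a.
Proof. by apply/mleP. Qed.

Lemma mle_trans g b a : mle g b -> mle b a -> mle g a.
Proof. by move=> /mleP h1 /mleP h2; apply/mleP=> i; apply: leq_trans (h1 i) (h2 i). Qed.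

Lemma mle_anti a b : mle a b -> mle b a -> a = b.
Proof. by move=> /mleP h1 /mleP h2; apply/ffunP=> i; apply/eqP; rewrite eqn_leq h1 h2. Qed.

Lemma mle0m a : mle (mzero n) a.
Proof. by apply/mleP=> i; rewrite ffunE. Qed.

Lemma mlem0 a : mle a (mzero n) = (a == mzero n).
Proof. by apply/idP/eqP=> [/mle_anti -> //|->]; [apply: mle0m | apply: mlexx]. Qed.

Lemma mltW a b : mlt a b -> mle a b.
Proof. by case/andP. Qed.

Lemma mle_mlt_trans g b a : mle g b -> mlt b a -> mlt g a.
Proof.
move=> hgb /andP [hba nba]; rewrite /mlt (mle_trans hgb hba); apply: contra nba.
by move=> /eqP eg; rewrite -eg in hba *; rewrite (mle_anti hba hgb).
Qed.

Lemma mlt_mle_trans g b a : mlt g b -> mle b a -> mlt g a.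
Proof.
move=> /andP [hgb ngb] hba; rewrite /mlt (mle_trans hgb hba); apply: contra ngb.
by move=> /eqP eg; rewrite -eg in hba; rewrite (mle_anti hgb hba).
Qed.

Lemma mdeg_msub a b : mle b a -> mdeg a = (mdeg b + mdeg (msub a b))%N.
Proof.
by move=> /mleP h; rewrite /mdeg -big_split; apply: eq_bigr=> i _; rewrite ffunE /= subnKC.
Qed.

Lemma mdeg_eq0 a : (mdeg a == 0%N) = (a == mzero n).
Proof.
rewrite /mdeg sum_nat_eq0; apply/forallP/eqP=> [h|-> i]; last by rewrite ffunE.
by apply/ffunP=> i; rewrite ffunE; apply/eqP; apply: h.
Qed.

Lemma mdeg0 : mdeg (mzero n) = 0%N.
Proof. by apply/eqP; rewrite mdeg_eq0. Qed.

Lemma mdeg_mle a b : mle b a -> (mdeg b <= mdeg a)%N.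
Proof. by move=> h; rewrite (mdeg_msub h) leq_addr. Qed.

Lemma mdeg_mlt a b : mlt b a -> (mdeg b < mdeg a)%N.
Proof.
case/andP=> hba nba; rewrite (mdeg_msub hba) -[X in (X < _)%N]addn0 ltn_add2l.
rewrite lt0n mdeg_eq0; apply: contra nba => /eqP e; apply/eqP/ffunP=> i.
move/ffunP: e => /(_ i); rewrite !ffunE => /eqP; rewrite subn_eq0 => hab.
by apply/eqP; rewrite eqn_leq hab andbT; move/mleP: hba => /(_ i).
Qed.

Lemma msubm0 a : msub a (mzero n) = a.
Proof. by apply/ffunP=> i; rewrite !ffunE subn0. Qed.

Lemma msubmm a : msub a a = mzero n.
Proof. by apply/ffunP=> i; rewrite !ffunE subnn. Qed.

Lemma msub_mle a b : mle (msub a b) a.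
Proof. by apply/mleP=> i; rewrite ffunE leq_subr. Qed.

Lemma msub_mlt a b : mle b a -> b != mzero n -> mlt (msub a b) a.
Proof.
move=> hba nzb; rewrite /mlt msub_mle; apply/eqP=> e.
move: (mdeg_msub hba); rewrite e -[X in X = _]add0n => /addIn /esym /eqP.
by rewrite mdeg_eq0 (negPf nzb).
Qed.

Lemma inI_mle (dd : 'I_n -> option nat) a b : mle b a -> inI dd a -> inI dd b.
Proof.
move=> /mleP h /forallP ha; apply/forallP=> i; have := ha i.
by case: (dd i) => // k; apply: leq_trans.
Qed.

Lemma madd0m a : madd (mzero n) a = a.
Proof. by apply/ffunP=> j; rewrite !ffunE. Qed.

Lemma mlt_madd_munit g i : mlt g (madd g (munit i)).
Proof.
rewrite /mlt; apply/andP; split; first by apply/mleP=> j; rewrite ffunE leq_addr.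
by apply/eqP=> /ffunP /(_ i); rewrite !ffunE eqxx addn1 => /n_Sn.
Qed.

Lemma mle_munit_msub g b i :
  mle g b -> mle (munit i) (msub b g) = mle (madd g (munit i)) b.
Proof.
move=> /mleP h; apply/mleP/mleP=> H j; have := H j; have := h j;
rewrite !ffunE; case: (j == i) => /=; lia.
Qed.

Lemma msub_munit g b i : msub (msub b g) (munit i) = msub b (madd g (munit i)).
Proof. by apply/ffunP=> j; rewrite !ffunE subnDA. Qed.

Definition below a : seq (mi n) :=
  [seq mof f | f <- enum {ffun 'I_n -> 'I_(mbound a).+1} & mlt (mof f) a].

Lemma mem_below a b : (b \in below a) = mlt b a.
Proof.
apply/mapP/idP=> [[f] | hba]; first by rewrite mem_filter => /andP [? _] ->.
have hb i : (b i < (mbound a).+1)%N.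
  by rewrite ltnS (leq_trans _ (leq_bigmax i)) //; move/mltW/mleP: hba.
have eb : mof [ffun i => Ordinal (hb i)] = b by apply/ffunP=> i; rewrite !ffunE.
by exists [ffun i => Ordinal (hb i)]; rewrite // mem_filter mem_enum eb hba.
Qed.

Lemma uniq_below a : uniq (below a).
Proof.
rewrite map_inj_uniq; first by rewrite filter_uniq // enum_uniq.
move=> f g /ffunP e.
by apply/ffunP=> i; apply/val_inj; have := e i; rewrite !ffunE.
Qed.

Lemma sum_belowE (A : pzRingType) a (F : mi n -> A) :
  sum_below a F = \sum_(b <- below a) F b.
Proof. by rewrite /sum_below big_map big_filter /index_enum -enumT. Qed.

Lemma big_below_mle (V : nmodType) a g (F : mi n -> V) : mlt g a ->
  \sum_(b <- below a | mle g b) F b = F g + \sum_(b <- below a | mlt g b) F b.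
Proof.
move=> hga; rewrite big_mkcond (bigD1_seq g) ?mem_below ?uniq_below //= mlexx.
by rewrite -big_mkcondr; congr (_ + _); apply: eq_bigl => b; rewrite /mlt andbC eq_sym.
Qed.

Lemma big_below_mle0 (V : nmodType) a g (F : mi n -> V) : ~~ mlt g a ->
  \sum_(b <- below a | mle g b) F b = 0.
Proof.
move=> nga; rewrite big_seq_cond big1 // => b /andP [].
by rewrite mem_below => /[swap] /mle_mlt_trans /[apply]; rewrite (negPf nga).
Qed.

End MultiIndices.

Lemma big_mulr_if (R : pzSemiRingType) (I : Type) (r : seq I) (P Q : pred I)
    (c F : I -> R) : (forall i, P i -> Q i) ->
  \sum_(i <- r | Q i) c i * (if P i then F i else 0) = \sum_(i <- r | P i) c i * F i.
Proof.
move=> hPQ; rewrite big_mkcond [RHS]big_mkcond; apply: eq_bigr => i _.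
by case: (boolP (P i)) => [/hPQ -> //|_]; rewrite mulr0; case: (Q i).
Qed.

Section DeltaDescents.
Variables (A : pzRingType) (n : nat) (d : 'I_n -> A -> A).
Variables (dd : 'I_n -> option nat) (y : mi n -> A).
Hypothesis hder : forall i, is_derivation (d i).
Hypothesis hcomm : forall i j u, d i (d j u) = d j (d i u).
Hypothesis hy : forall a, inI dd a -> inN d a (y a) /\ dpow d a (y a) = 1.
Implicit Types (a b g : mi n) (u v c : A).

Lemma der_is_zmod_morphism i : zmod_morphism (d i).
Proof. by move=> u v; have [dD _] := hder i; apply: (addIr (d i v)); rewrite -dD !subrK. Qed.

Definition dpow_seq (s : seq 'I_n) a : A -> A :=
  foldr (fun i f u => iter (a i) (d i) (f u)) id s.

Lemma dpow_is_zmod_morphism a : zmod_morphism (dpow d a).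
Proof.
rewrite /dpow; elim: (enum 'I_n) => // i s IH u v /=; rewrite IH.
by elim: (a i) => //= k ->; apply: der_is_zmod_morphism.
Qed.

HB.instance Definition _ a :=
  GRing.isZmodMorphism.Build A A (dpow d a) (dpow_is_zmod_morphism a).

Lemma dpowr0 a : dpow d a 0 = 0. Proof. exact: raddf0. Qed.
Lemma dpowN a : {morph dpow d a : u / - u}. Proof. exact: raddfN. Qed.
Lemma dpowB a : {morph dpow d a : u v / u - v}. Proof. exact: raddfB. Qed.
Lemma dpow_sum a (I : Type) (r : seq I) (P : pred I) (F : I -> A) :
  dpow d a (\sum_(i <- r | P i) F i) = \sum_(i <- r | P i) dpow d a (F i).
Proof. exact: raddf_sum. Qed.

Lemma iter_der_comm k i j u : iter k (d i) (d j u) = d j (iter k (d i) u).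
Proof. by elim: k => //= k ->; rewrite hcomm. Qed.

Lemma dpow0 u : dpow d (mzero n) u = u.
Proof. by rewrite /dpow; elim: (enum 'I_n) => //= i s ->; rewrite ffunE. Qed.

Lemma dpow_seq_madd_munit s a i u : uniq s -> dpow_seq s (madd a (munit i)) u =
  if i \in s then d i (dpow_seq s a u) else dpow_seq s a u.
Proof.
elim: s => //= j s IH /andP [js us]; rewrite IH // !ffunE in_cons.
case: (eqVneq j i) => [<-|ne] /=; first by rewrite (negPf js) addn1.
by rewrite addn0; case: (i \in s); rewrite ?iter_der_comm.
Qed.

Lemma dpow_madd_munit a i u : dpow d (madd a (munit i)) u = d i (dpow d a u).
Proof. by rewrite [LHS]dpow_seq_madd_munit ?enum_uniq ?mem_enum. Qed.

Lemma dpow_munit i u : dpow d (munit i) u = d i u.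
Proof. by rewrite -(madd0m (munit i)) dpow_madd_munit dpow0. Qed.

Lemma dconstE c : dconst d c <-> forall i, dpow d (munit i) c = 0.
Proof. by split=> h i; have := h i; rewrite dpow_munit. Qed.

Lemma dpow_mulcl a c u : dconst d c -> dpow d a (c * u) = c * dpow d a u.
Proof.
move=> hc; rewrite /dpow; elim: (enum 'I_n) => //= i s ->.
by elim: (a i) => //= k ->; case: (hder i) => _ ->; rewrite hc mul0r add0r.
Qed.

Lemma dconst1 : dconst d 1.
Proof.
move=> i; case: (hder i) => _ /(_ 1 1); rewrite !mulr1 mul1r => /esym e.
by apply: (addrI (d i 1)); rewrite e addr0.
Qed.

Lemma dconstN c : dconst d c -> dconst d (- c).
Proof. by move=> /dconstE h; apply/dconstE => i; rewrite dpowN h oppr0. Qed.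

Lemma dconstB c1 c2 : dconst d c1 -> dconst d c2 -> dconst d (c1 - c2).
Proof. by move=> /dconstE h1 /dconstE h2; apply/dconstE => i; rewrite dpowB h1 h2 subrr. Qed.

Lemma dconstM c1 c2 : dconst d c1 -> dconst d c2 -> dconst d (c1 * c2).
Proof. by move=> h1 /dconstE h2; apply/dconstE => i; rewrite dpow_mulcl // h2 mulr0. Qed.

Lemma dconst_sum (I : Type) (r : seq I) (P : pred I) (F : I -> A) :
  (forall i, P i -> dconst d (F i)) -> dconst d (\sum_(i <- r | P i) F i).
Proof.
move=> h; apply/dconstE => j; rewrite dpow_sum big1 // => i /h /dconstE; exact.
Qed.

Lemma inN_dpow_seq s a b u : inN d b u -> inN d b (dpow_seq s a u).
Proof.
move=> hu j; rewrite /dpow_seq; elim: s => [|i s IH] /=; first exact: hu.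
elim: (a i) => [|k IHk]; first exact: IH.
by rewrite /= iter_der_comm hcomm IHk -dpow_munit dpowr0.
Qed.

Lemma iter_der0 k i : iter k (d i) 0 = 0.
Proof. by elim: k => //= k ->; rewrite -dpow_munit dpowr0. Qed.

Lemma dpow_inN a b u : inN d b u -> ~~ mle a b -> dpow d a u = 0.
Proof.
rewrite /mle negb_forall => hu /existsP [i]; rewrite -ltnNge => hi.
rewrite /dpow; have : i \in enum 'I_n by rewrite mem_enum.
elim: (enum 'I_n) => //= j s IH; rewrite in_cons.
case: eqP => [<- _|_ /IH ->]; last exact: iter_der0.
by rewrite -(subnK hi) iterD (inN_dpow_seq s a hu i) iter_der0.
Qed.

Lemma dpow1 a : a != mzero n -> dpow d a 1 = 0.
Proof.
move=> nz; apply: (@dpow_inN _ (mzero n)); last by rewrite mlem0.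
by move=> i; rewrite ffunE; apply: dconst1.
Qed.

Definition ycomb a w := exists s : seq (A * mi n),
  (forall p, p \in s -> [/\ dconst d p.1, mlt p.2 a & p.2 != mzero n]) /\
  w = \sum_(p <- s) p.1 * y p.2.

Lemma ycombD a w1 w2 : ycomb a w1 -> ycomb a w2 -> ycomb a (w1 + w2).
Proof.
move=> [s1 [h1 ->]] [s2 [h2 ->]]; exists (s1 ++ s2); split; last by rewrite big_cat.
by move=> p; rewrite mem_cat => /orP [] ?; [apply: h1 | apply: h2].
Qed.

Lemma ycombMl a c w : dconst d c -> ycomb a w -> ycomb a (c * w).
Proof.
move=> hc [s [h ->]]; exists [seq (c * p.1, p.2) | p <- s]; split.
  by move=> _ /mapP [p /h [? ? ?] ->]; split=> //; apply: dconstM.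
by rewrite big_map mulr_sumr; apply: eq_bigr => p _; rewrite mulrA.
Qed.

Lemma ycombN a w : ycomb a w -> ycomb a (- w).
Proof. by rewrite -mulN1r; apply/ycombMl/dconstN/dconst1. Qed.

Lemma ycomb_sum a (I : Type) (r : seq I) (P : pred I) (F : I -> A) :
  (forall i, P i -> ycomb a (F i)) -> ycomb a (\sum_(i <- r | P i) F i).
Proof.
move=> h; elim/big_rec: _ => [|i w Pi]; last exact/ycombD/h.
by exists [::]; rewrite big_nil.
Qed.

Lemma ycomb_mle a b w : mle b a -> ycomb b w -> ycomb a w.
Proof.
move=> hba [s [h ->]]; exists s; split=> // p /h [? hpb ?].
by split=> //; apply: mlt_mle_trans hba.
Qed.

Lemma ycomb_y a b c : dconst d c -> mlt b a -> b != mzero n -> ycomb a (c * y b).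
Proof.
by move=> *; exists [:: (c, b)]; rewrite big_seq1; split=> // p; rewrite mem_seq1 => /eqP ->.
Qed.

Lemma ycomb_coef a w : ycomb a w -> exists c : mi n -> A,
  [/\ forall b, mlt b a -> dconst d (c b), c (mzero n) = 0 &
      w = sum_below a (fun b => c b * y b)].
Proof.
move=> [s [h ->]]; exists (fun b => \sum_(p <- s | p.2 == b) p.1); split.
- by move=> b _; rewrite big_seq_cond; apply: dconst_sum => p /andP [/h []].
- by rewrite big1_seq // => p /andP [/eqP e /h []]; rewrite e eqxx.
rewrite sum_belowE; under [RHS]eq_bigr do rewrite mulr_suml big_mkcond.
rewrite exchange_big; apply: eq_big_seq => p /h [_ hpa _] /=.
rewrite (bigD1_seq p.2) ?mem_below ?uniq_below //= eqxx big1 ?addr0 // => b.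
by rewrite eq_sym => /negPf ->.
Qed.

Lemma ycoef_eq0 a (e : mi n -> A) : inI dd a ->
  (forall b, mlt b a -> dconst d (e b)) -> e (mzero n) = 0 ->
  (forall g, g != mzero n -> dpow d g (\sum_(b <- below a) e b * y b) = 0) ->
  forall b, mlt b a -> e b = 0.
Proof.
move=> ha he e0 hw; suff key k b : (mdeg a - mdeg b <= k)%N -> mlt b a -> e b = 0.
  by move=> b; apply: (key (mdeg a - mdeg b)%N).
elim: k b => [|k IHk] b hk hba; first by have := mdeg_mlt hba; lia.
have [->//|nzb] := eqVneq b (mzero n).
have hb : inI dd b by apply: inI_mle (mltW hba) ha.
have := hw b nzb; rewrite dpow_sum (bigD1_seq b) ?mem_below ?uniq_below //=.
rewrite (dpow_mulcl _ _ (he _ hba)) (proj2 (hy hb)) mulr1 big_seq_cond big1 ?addr0 //.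
move=> b' /andP [hb'a nb']; rewrite mem_below in hb'a; rewrite (dpow_mulcl _ _ (he _ hb'a)).
have hb' : inI dd b' by apply: inI_mle (mltW hb'a) ha.
have [hbb'|nbb'] := boolP (mle b b'); last by rewrite (dpow_inN (proj1 (hy hb')) nbb') mulr0.
have /mdeg_mlt : mlt b b' by rewrite /mlt hbb' eq_sym.
by move=> ltbb'; rewrite (IHk b') ?mul0r //; have := mdeg_mlt hb'a; lia.
Qed.

Lemma left_descent_unique x x' : is_descent d dd x -> left_form d dd y x ->
  is_descent d dd x' -> left_form d dd y x' -> forall a, inI dd a -> x' a = x a.
Proof.
move=> [x0 hx] lx [x'0 hx'] lx' a; have [m] := ubnP (mdeg a).
elim: m a => // m IHm a ltam ha.
have [->|nza] := eqVneq a (mzero n); first by rewrite x0 x'0.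
have [c [hc [c0 ex]]] := lx a ha nza; have [c' [hc' [c'0 ex']]] := lx' a ha nza.
have hw : x' a - x a = \sum_(b <- below a) (c' b - c b) * y b.
  rewrite ex ex' !sum_belowE opprD addrACA subrr add0r -sumrB.
  by apply: eq_bigr => b _; rewrite mulrBl.
apply/eqP; rewrite -subr_eq0 hw big_seq big1 // => b; rewrite mem_below => hba.
rewrite (ycoef_eq0 (e := fun b => c' b - c b) ha) ?mul0r //.
- by move=> b' hb'a; apply: dconstB; [apply: hc' | apply: hc].
- by rewrite c0 c'0 subrr.
move=> g nzg; rewrite -hw dpowB hx' // hx //; case: ifP => hga; last by rewrite subrr.
rewrite IHm ?subrr //; last exact: inI_mle (msub_mle _ _) ha.
exact: leq_trans (mdeg_mlt (msub_mlt hga nzg)) (ltnSE ltam).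
Qed.

Definition descent_upto N (x : mi n -> A) :=
  x (mzero n) = 1 /\ forall b, inI dd b -> (mdeg b <= N)%N ->
    (forall g, dpow d g (x b) = if mle g b then x (msub b g) else 0) /\
    (b != mzero n -> ycomb b (x b - y b)).

Fixpoint corr_fuel (x : mi n -> A) a k g : A :=
  if k is k'.+1 then
    dpow d g (y a) - x (msub a g) -
      \sum_(b <- below a | mlt g b) corr_fuel x a k' b * x (msub b g)
  else 0.

Lemma corr_fuel_stable x a k k' g :
  (mdeg a - mdeg g < k)%N -> (mdeg a - mdeg g < k')%N ->
  corr_fuel x a k g = corr_fuel x a k' g.
Proof.
elim: k k' g => [|k IH] [|k'] g //= hk hk'; congr (_ - _).
rewrite big_seq_cond [RHS]big_seq_cond; apply: eq_bigr => b /andP [hba hgb].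
rewrite mem_below in hba; have := mdeg_mlt hba; have := mdeg_mlt hgb.
by move=> *; rewrite (IH k') //; lia.
Qed.

(* The recursion only descends to b with g < b < a, so (mdeg a - mdeg g).+1
   steps of fuel always suffice. *)
Definition corr x a g := corr_fuel x a (mdeg a - mdeg g).+1 g.

Lemma corrE x a g : corr x a g =
  dpow d g (y a) - x (msub a g) - \sum_(b <- below a | mlt g b) corr x a b * x (msub b g).
Proof.
rewrite /corr /=; congr (_ - _); rewrite big_seq_cond [RHS]big_seq_cond.
apply: eq_bigr => b /andP [hba hgb]; rewrite mem_below in hba.
have := mdeg_mlt hba; have := mdeg_mlt hgb.
by move=> *; rewrite (@corr_fuel_stable _ _ _ (mdeg a - mdeg b).+1) //; lia.
Qed.

Definition next_term x a := y a - \sum_(b <- below a | b != mzero n) corr x a b * x b.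

Section NextTerm.
Variables (N : nat) (x : mi n -> A) (a : mi n).
Hypotheses (hx : descent_upto N x) (ha : inI dd a) (hdeg : mdeg a = N.+1).

Lemma descent_upto_below b : mlt b a ->
  (forall g, dpow d g (x b) = if mle g b then x (msub b g) else 0) /\
  (b != mzero n -> ycomb b (x b - y b)).
Proof.
move=> hba; apply: (proj2 hx); first exact: inI_mle (mltW hba) ha.
by rewrite -ltnS -hdeg mdeg_mlt.
Qed.

Lemma dpow_below b g : mlt b a -> dpow d g (x b) = if mle g b then x (msub b g) else 0.
Proof. by move=> /descent_upto_below []. Qed.

Lemma corr_sum_mle g :
  dpow d g (y a) - \sum_(b <- below a | mle g b) corr x a b * x (msub b g) =
  if mle g a then x (msub a g) else 0.
Proof.
have [hga|nga] := boolP (mlt g a).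
  by rewrite (mltW hga) big_below_mle // msubmm (proj1 hx) mulr1 (corrE x a g) subrK subKr.
rewrite big_below_mle0 // subr0; have [hga|] := boolP (mle g a).
  have -> : g = a by apply/eqP; move: nga; rewrite /mlt hga negbK.
  by rewrite (proj2 (hy ha)) msubmm (proj1 hx).
exact: dpow_inN (proj1 (hy ha)).
Qed.

Lemma corr_dconst g : mlt g a -> g != mzero n -> dconst d (corr x a g).
Proof.
move=> hga; have [k] := ubnP (mdeg a - mdeg g)%N.
elim: k g hga => // k IHk g hga ltk nzg; apply/dconstE => i.
set g' := madd g (munit i); have hgg' : mlt g g' := mlt_madd_munit g i.
rewrite corrE !dpowB dpow_sum dpow_munit -dpow_madd_munit -/g'.
rewrite dpow_below ?msub_mlt ?(mltW hga) // mle_munit_msub ?(mltW hga) // msub_munit.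
have -> : \sum_(b <- below a | mlt g b) dpow d (munit i) (corr x a b * x (msub b g)) =
          \sum_(b <- below a | mle g' b) corr x a b * x (msub b g').
  rewrite -(@big_mulr_if _ _ _ (mle g') (mlt g)) => [|b]; last exact: mlt_mle_trans.
  rewrite big_seq_cond [RHS]big_seq_cond; apply: eq_bigr => b /andP [hba hgb].
  rewrite mem_below in hba; have nzb : b != mzero n.
    by apply: contraTneq hgb => ->; rewrite /mlt mlem0 andbN.
  rewrite dpow_mulcl; last by apply: IHk => //; have := mdeg_mlt hba; have := mdeg_mlt hgb; lia.
  rewrite dpow_below ?(mle_mlt_trans (msub_mle _ _) hba) //.
  by rewrite mle_munit_msub ?(mltW hgb) // msub_munit.
by rewrite addrAC corr_sum_mle subrr.
Qed.

Lemma dpow_next_term g : g != mzero n ->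
  dpow d g (next_term x a) = if mle g a then x (msub a g) else 0.
Proof.
move=> nzg; rewrite -corr_sum_mle dpowB dpow_sum; congr (_ - _).
rewrite -(@big_mulr_if _ _ _ (mle g) (fun b => b != mzero n)) => [|b]; last first.
  by apply: contraTneq => ->; rewrite mlem0.
rewrite big_seq_cond [RHS]big_seq_cond; apply: eq_bigr => b /andP [hba nzb].
by rewrite mem_below in hba; rewrite dpow_mulcl ?dpow_below //; apply: corr_dconst.
Qed.

Lemma ycomb_next_term : ycomb a (next_term x a - y a).
Proof.
rewrite /next_term addrC addKr; apply/ycombN; rewrite big_seq_cond.
apply: ycomb_sum => b /andP [hba nzb]; rewrite mem_below in hba.
have hcorr := corr_dconst hba nzb.
have [_ /(_ nzb) hxb] := descent_upto_below hba.
rewrite -(subrK (y b) (x b)) mulrDr; apply: ycombD; last exact: ycomb_y.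
exact/ycombMl/(ycomb_mle (mltW hba)).
Qed.
End NextTerm.

Fixpoint descent_trunc N : mi n -> A :=
  if N is N'.+1 then fun a =>
    if (mdeg a <= N')%N then descent_trunc N' a else next_term (descent_trunc N') a
  else fun _ => 1.

Lemma descent_upto_trunc N : descent_upto N (descent_trunc N).
Proof.
elim: N => [|N IH].
  split=> // b _; rewrite leqn0 mdeg_eq0 => /eqP ->; split=> [g|]; last by rewrite eqxx.
  by rewrite mlem0; have [->|nzg] := eqVneq g (mzero n); [apply: dpow0 | apply: dpow1].
set x := descent_trunc N; have [x0 hxN] := IH.
have lowE b : (mdeg b <= N)%N -> descent_trunc N.+1 b = x b by move=> /= ->.
split=> [|b hb hbN]; first by rewrite lowE // mdeg0.
have [hbN'|hbN'] := boolP (mdeg b <= N)%N.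
  have [hdpow hcomb] := hxN b hb hbN'; split; last by rewrite lowE.
  move=> g; rewrite lowE // hdpow; case: ifP => // _; rewrite lowE //.
  exact: leq_trans (mdeg_mle (msub_mle _ _)) hbN'.
have hdeg : mdeg b = N.+1 by apply/eqP; rewrite eqn_leq hbN ltnNge hbN'.
have -> : descent_trunc N.+1 b = next_term x b by rewrite /= (negPf hbN').
split=> [g|_]; last exact: (ycomb_next_term IH hb hdeg).
have [->|nzg] := eqVneq g (mzero n); first by rewrite dpow0 mle0m msubm0 /= (negPf hbN').
rewrite (dpow_next_term IH hb hdeg nzg); case: ifP => // hgb; rewrite lowE //.
by rewrite -ltnS -hdeg; apply/mdeg_mlt/msub_mlt.
Qed.

Definition left_descent a := descent_trunc (mdeg a) a.

Lemma descent_truncE N a : (mdeg a <= N)%N -> descent_trunc N a = left_descent a.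
Proof.
move=> h; rewrite -(subnKC h); elim: (N - mdeg a)%N => [|k IH]; first by rewrite addn0.
by rewrite addnS /= leq_addr.
Qed.

Lemma left_descent_is_descent : is_descent d dd left_descent.
Proof.
split=> [|g b hb]; first by rewrite /left_descent mdeg0; case: (descent_upto_trunc 0).
have [hdpow _] := (proj2 (descent_upto_trunc (mdeg b))) b hb (leqnn _).
rewrite /left_descent hdpow; case: ifP => // _.
exact/descent_truncE/mdeg_mle/msub_mle.
Qed.

Lemma left_descent_left_form : left_form d dd y left_descent.
Proof.
move=> a ha nza; have [_ /(_ nza) hw] := (proj2 (descent_upto_trunc (mdeg a))) a ha (leqnn _).
by have [c [hc c0 ew]] := ycomb_coef hw; exists c; rewrite -ew subrKC.
Qed.

Lemma left_descent_exists_unique : exists x : mi n -> A,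
  is_descent d dd x /\ left_form d dd y x /\
  forall x', is_descent d dd x' -> left_form d dd y x' -> forall a, inI dd a -> x' a = x a.
Proof.
exists left_descent; split; first exact: left_descent_is_descent.
split=> [|x' hx' lx']; first exact: left_descent_left_form.
exact: left_descent_unique left_descent_is_descent left_descent_left_form hx' lx'.
Qed.

End DeltaDescents.

Theorem lemma2p3 (A : pzRingType) (n : nat) (d : 'I_n -> A -> A)
  (dd : 'I_n -> option nat) (y : mi n -> A)
  (hder : forall i, is_derivation (d i))
  (hcomm : forall i j x, d i (d j x) = d j (d i x))
  (hy : forall a : mi n, inI dd a -> inN d a (y a) /\ dpow d a (y a) = 1) :
  (exists x : mi n -> A,
     is_descent d dd x /\ left_form d dd y x /\
     forall x' : mi n -> A, is_descent d dd x' -> left_form d dd y x' ->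
       forall a, inI dd a -> x' a = x a) /\
  (exists z : mi n -> A,
     is_descent d dd z /\ right_form d dd y z /\
     forall z' : mi n -> A, is_descent d dd z' -> right_form d dd y z' ->
       forall a, inI dd a -> z' a = z a).
Proof.
split; first exact: left_descent_exists_unique.
have hder_c i : @is_derivation A^c (d i).
  by have [dD dM] := hder i; split=> // u v; rewrite /= dM addrC.
exact: (@left_descent_exists_unique A^c n d dd y hder_c hcomm hy).
Qed.
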